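(* Let $x\in(0,\tfrac12)$ be irrational. (a) If $B(x)<\infty$, then $B(-x)<\infty$ and $$B^-(x):=\tfrac12\bigl(B(x)-B(-x)\bigr)=\frac{x}{2}\log\frac{1-x}{x}.$$ (b) If the series $W(x)$ converges, then the series $W(-x)$ converges and $$W^+(x):=\tfrac12\bigl(W(x)+W(-x)\bigr)=\frac{x}{2}\log\frac{1-x}{x}-\log(1-x).$$ In particular, since $B^-$ is odd and $1$-periodic and $W^+$ is even and $1$-periodic, $B^-$ and $W^+$ are uniformly bounded on the set of irrationals where they are defined.
   Context: For real $x$ let $\{x\}=x-\lfloor x\rfloor$ and let $A(y)=\{1/y\}$ for $y\in(0,1)$ (Gauss map), with iterates $A^j$, $A^0=\mathrm{id}$, and empty products equal to $1$. For irrational $x$ put $y=\{x\}$ and define $$B(x)=\sum_{j\ge0}\Bigl(\prod_{k=0}^{j-1}A^k(y)\Bigr)\log\frac{1}{A^j(y)}\in[0,+\infty],\qquad W(x)=\sum_{j\ge0}(-1)^j\Bigl(\prod_{k=0}^{j-1}A^k(y)\Bigr)\log\frac{1}{A^j(y)},$$ the latter being said to converge when its partial sums converge. Equivalently, $B$ and $W$ are $1$-periodic and satisfy, for irrational $x\in(0,1)$, $B(x)=-\log x+xB(1/x)$ and $W(x)=-\log x-xW(1/x)$ (with $W(x)$ convergent iff $W(1/x)$ convergent). *)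

From Stdlib Require Import Reals.
From Coquelicot Require Import Coquelicot.
Open Scope R_scope.

(* fractional part {x} = x - floor x  (Int_part is the floor) *)
Definition frac (x : R) : R := x - IZR (Int_part x).

Definition irrational (x : R) : Prop :=
  ~ exists (p q : Z), q <> 0%Z /\ x = IZR p / IZR q.

Definition gaussA (y : R) : R := frac (1 / y).

Fixpoint gaussIter (j : nat) (y : R) : R :=
  match j with O => y | S j' => gaussA (gaussIter j' y) end.

Fixpoint gaussProd (j : nat) (y : R) : R :=
  match j with O => 1 | S j' => gaussProd j' y * gaussIter j' y end.

Definition Bterm (x : R) (j : nat) : R :=
  gaussProd j (frac x) * ln (1 / gaussIter j (frac x)).

Definition Wterm (x : R) (j : nat) : R :=
  (-1) ^ j * Bterm x j.

(* B(x) < oo  <->  the (nonnegative) series converges: ex_series (Bterm x);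
   B(x) is then Series (Bterm x).
   W(x) converges <-> its partial sums converge: ex_series (Wterm x). *)
Definition Bminus (x : R) : R := (Series (Bterm x) - Series (Bterm (- x))) / 2.
Definition Wplus (x : R) : R := (Series (Wterm x) + Series (Wterm (- x))) / 2.

From Stdlib Require Import Reals Lra Lia FunctionalExtensionality.
From Coquelicot Require Import Coquelicot.
Open Scope R_scope.

(* For 0 < x < 1/2 we have {-x} = 1 - x, and the Gauss map sends 1 - x to
   x / (1 - x) and then to A(x): the orbit of {-x} rejoins the orbit of {x}
   one step late, while the product of its first two points is
   (1 - x) * x / (1 - x) = x.  Hence the series of B(-x) (resp. W(-x)) is two
   explicit terms followed by the tail of B(x) (resp. minus the tail of W(x)),
   and B(x) - B(-x), W(x) + W(-x) collapse to closed forms.  These closed forms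
   are bounded on (0, 1/2), and periodicity and parity reduce every irrational
   x to that interval. *)

Lemma frac_of_bounds (r : R) (z : Z) : IZR z <= r < IZR z + 1 -> frac r = r - IZR z.
Proof.
  intros Hr. unfold frac. rewrite <- (Int_part_spec r z); [reflexivity | lra].
Qed.

Lemma frac_sub_1 (r : R) : frac (r - 1) = frac r.
Proof.
  destruct (base_Int_part r).
  rewrite (frac_of_bounds (r - 1) (Int_part r - 1)); unfold frac; rewrite ?minus_IZR;
    simpl; lra.
Qed.

Lemma frac_unit_interval (t : R) : 0 < t < 1 -> frac t = t /\ frac (- t) = 1 - t.
Proof.
  intros Ht. rewrite (frac_of_bounds t 0), (frac_of_bounds (- t) (-1)); simpl; lra.
Qed.

Lemma irrational_frac (x : R) :
  irrational x -> 0 < frac x < 1 /\ frac x <> 1 / 2 /\ frac (- x) = 1 - frac x.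
Proof.
  intros Hirr. destruct (base_Int_part x). unfold frac.
  assert (Hint : x - IZR (Int_part x) <> 0).
  { intros E. apply Hirr. exists (Int_part x), 1%Z. split; [lia | simpl; lra]. }
  assert (Hhalf : x - IZR (Int_part x) <> 1 / 2).
  { intros E. apply Hirr. exists (2 * Int_part x + 1)%Z, 2%Z. split; [lia |].
    rewrite plus_IZR, mult_IZR. simpl. lra. }
  fold (frac (- x)). rewrite (frac_of_bounds (- x) (- Int_part x - 1));
    rewrite ?minus_IZR, ?opp_IZR; simpl; lra.
Qed.

Lemma irrational_reduce_half (x : R) :
  irrational x -> exists t, 0 < t < 1 / 2 /\
    ((frac x = frac t /\ frac (- x) = frac (- t)) \/
     (frac x = frac (- t) /\ frac (- x) = frac t)).
Proof.
  intros Hirr. destruct (irrational_frac x Hirr) as (Hy & Hhalf & Hopp).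
  destruct (Rlt_or_le (frac x) (1 / 2)) as [Hlt | Hge].
  - exists (frac x). destruct (frac_unit_interval (frac x)) as [E1 E2]; [lra |].
    split; [lra | left; lra].
  - exists (1 - frac x). destruct (frac_unit_interval (1 - frac x)) as [E1 E2]; [lra |].
    split; [lra | right; lra].
Qed.

Lemma gaussIter_succ (j : nat) (y : R) : gaussIter (S j) y = gaussIter j (gaussA y).
Proof. induction j as [| j IH]; simpl in *; [reflexivity | now rewrite <- IH]. Qed.

Lemma gaussProd_succ (j : nat) (y : R) : gaussProd (S j) y = y * gaussProd j (gaussA y).
Proof.
  induction j as [| j IH]; [simpl; ring |].
  change (gaussProd (S (S j)) y) with (gaussProd (S j) y * gaussIter (S j) y).
  rewrite IH, gaussIter_succ. simpl. ring.
Qed.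

Lemma gaussA_one_sub (x : R) : 0 < x < 1 / 2 -> gaussA (1 - x) = x / (1 - x).
Proof.
  intros Hx. unfold gaussA.
  assert (H1 : 1 <= 1 / (1 - x)) by (apply (Rmult_le_reg_r (1 - x)); field_simplify; lra).
  assert (H2 : 1 / (1 - x) < 2) by (apply (Rmult_lt_reg_r (1 - x)); field_simplify; lra).
  rewrite (frac_of_bounds _ 1); simpl; [field |]; lra.
Qed.

Lemma gaussA_div_one_sub (x : R) : 0 < x < 1 -> gaussA (x / (1 - x)) = gaussA x.
Proof.
  intros Hx. unfold gaussA.
  replace (1 / (x / (1 - x))) with (1 / x - 1) by (field; lra).
  apply frac_sub_1.
Qed.

Lemma Bterm_frac_eq (a b : R) : frac a = frac b -> Bterm a = Bterm b.
Proof. intros E. extensionality j. unfold Bterm. now rewrite E. Qed.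

Lemma Wterm_frac_eq (a b : R) : frac a = frac b -> Wterm a = Wterm b.
Proof. intros E. extensionality j. unfold Wterm. now rewrite (Bterm_frac_eq a b E). Qed.

Section Reflection.

Variable x : R.
Hypothesis Hx : 0 < x < 1 / 2.

Lemma Bterm_opp_succ_succ (j : nat) : Bterm (- x) (S (S j)) = Bterm x (S j).
Proof.
  destruct (frac_unit_interval x) as [Ex Emx]; [lra |].
  unfold Bterm. rewrite Ex, Emx,
    !gaussIter_succ, !gaussProd_succ, gaussA_one_sub, gaussA_div_one_sub by lra.
  simpl. f_equal. field. lra.
Qed.

Lemma Wterm_opp_succ_succ (j : nat) : Wterm (- x) (S (S j)) = - Wterm x (S j).
Proof. unfold Wterm. rewrite Bterm_opp_succ_succ. simpl. ring. Qed.

Lemma Bterm_initial :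
  Bterm x 0 = - ln x /\ Bterm (- x) 0 = - ln (1 - x) /\
  Bterm (- x) 1 = (1 - x) * (ln (1 - x) - ln x).
Proof.
  destruct (frac_unit_interval x) as [Ex Emx]; [lra |].
  unfold Bterm. rewrite Ex, Emx. simpl. rewrite gaussA_one_sub by lra.
  replace (1 / (x / (1 - x))) with ((1 - x) / x) by (field; lra).
  rewrite !ln_div, ln_1 by lra. repeat split; ring.
Qed.

End Reflection.

Lemma ex_series_shift2 (u v : nat -> R) (c : R) :
  (forall j, u (S (S j)) = c * v (S j)) -> ex_series v ->
  ex_series u /\ Series u = u 0%nat + u 1%nat + c * (Series v - v 0%nat).
Proof.
  intros Huv Hv.
  assert (Hv1 : ex_series (fun j => v (S j))) by exact (proj1 (ex_series_incr_1 v) Hv).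
  assert (Hu2 : ex_series (fun j => u (S (S j)))).
  { apply (ex_series_ext (fun j => c * v (S j))); [intros j; now rewrite Huv |].
    exact (@ex_series_scal_l _ R_NormedModule c _ Hv1). }
  assert (Hu1 : ex_series (fun j => u (S j))) by exact (proj2 (ex_series_incr_1 _) Hu2).
  assert (Hu : ex_series u) by exact (proj2 (ex_series_incr_1 u) Hu1).
  split; [exact Hu |].
  rewrite (Series_incr_1 u Hu), (Series_incr_1 _ Hu1), (Series_incr_1 v Hv).
  rewrite (Series_ext _ (fun j => c * v (S j)) Huv), Series_scal_l. ring.
Qed.

Lemma Bminus_closed_form (x : R) : 0 < x < 1 / 2 -> ex_series (Bterm x) ->
  ex_series (Bterm (- x)) /\ Bminus x = x / 2 * ln ((1 - x) / x).
Proof.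
  intros Hx HB. destruct (Bterm_initial x Hx) as (E0 & Em0 & Em1).
  destruct (ex_series_shift2 (Bterm (- x)) (Bterm x) 1) as [HBm Hsum]; auto.
  { intros j. rewrite Bterm_opp_succ_succ by exact Hx. ring. }
  split; [exact HBm |].
  unfold Bminus. rewrite Hsum, E0, Em0, Em1, ln_div by lra. field.
Qed.

Lemma Wplus_closed_form (x : R) : 0 < x < 1 / 2 -> ex_series (Wterm x) ->
  ex_series (Wterm (- x)) /\ Wplus x = x / 2 * ln ((1 - x) / x) - ln (1 - x).
Proof.
  intros Hx HW. destruct (Bterm_initial x Hx) as (E0 & Em0 & Em1).
  destruct (ex_series_shift2 (Wterm (- x)) (Wterm x) (-1)) as [HWm Hsum]; auto.
  { intros j. rewrite Wterm_opp_succ_succ by exact Hx. ring. }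
  split; [exact HWm |].
  assert (F0 : Wterm x 0 = - ln x) by (unfold Wterm; rewrite E0; simpl; ring).
  assert (Fm0 : Wterm (- x) 0 = - ln (1 - x)) by (unfold Wterm; rewrite Em0; simpl; ring).
  assert (Fm1 : Wterm (- x) 1 = - ((1 - x) * (ln (1 - x) - ln x)))
    by (unfold Wterm; rewrite Em1; simpl; ring).
  unfold Wplus. rewrite Hsum, F0, Fm0, Fm1, ln_div by lra. field.
Qed.

Lemma ln_le_sub_1 (t : R) : 0 < t -> ln t <= t - 1.
Proof.
  intros Ht. rewrite <- (ln_exp (t - 1)).
  apply ln_le; [exact Ht | pose proof (exp_ineq1_le (t - 1)); lra].
Qed.

Lemma ln_one_sub_bounds (t : R) : 0 <= t <= 1 / 2 -> -1 <= ln (1 - t) <= 0.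
Proof.
  intros Ht. pose proof (ln_le_sub_1 (1 - t)).
  pose proof (ln_le_sub_1 (/ (1 - t))). rewrite ln_Rinv in * by lra.
  assert (/ (1 - t) <= 2) by (apply (Rmult_le_reg_r (1 - t)); field_simplify; lra).
  assert (0 < / (1 - t)) by (apply Rinv_0_lt_compat; lra).
  lra.
Qed.

Lemma mul_ln_bounds (t : R) : 0 < t <= 1 -> -1 <= t * ln t <= 0.
Proof.
  intros Ht. pose proof (ln_le_sub_1 t ltac:(lra)).
  pose proof (ln_le_sub_1 (/ t)). rewrite ln_Rinv in * by lra.
  assert (0 < / t) by (apply Rinv_0_lt_compat; lra).
  assert (t * / t = 1) by (field; lra).
  nra.
Qed.

Lemma Bminus_formula_bound (t : R) : 0 < t < 1 / 2 ->
  Rabs (t / 2 * ln ((1 - t) / t)) <= 1.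
Proof.
  intros Ht. pose proof (ln_one_sub_bounds t). pose proof (mul_ln_bounds t).
  rewrite ln_div by lra. apply Rabs_le. nra.
Qed.

Lemma Wplus_formula_bound (t : R) : 0 < t < 1 / 2 ->
  Rabs (t / 2 * ln ((1 - t) / t) - ln (1 - t)) <= 2.
Proof.
  intros Ht. pose proof (ln_one_sub_bounds t). pose proof (mul_ln_bounds t).
  rewrite ln_div by lra. apply Rabs_le. nra.
Qed.

Lemma Bminus_bounded (x : R) : irrational x ->
  ex_series (Bterm x) -> ex_series (Bterm (- x)) -> Rabs (Bminus x) <= 1.
Proof.
  intros Hirr HB HBm. unfold Bminus.
  destruct (irrational_reduce_half x Hirr) as (t & Ht & [[E Em] | [E Em]]);
    rewrite (Bterm_frac_eq _ _ E), (Bterm_frac_eq _ _ Em) in *.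
  - destruct (Bminus_closed_form t Ht HB) as [_ Ev]. unfold Bminus in Ev.
    rewrite Ev. now apply Bminus_formula_bound.
  - destruct (Bminus_closed_form t Ht HBm) as [_ Ev]. unfold Bminus in Ev.
    replace ((Series (Bterm (- t)) - Series (Bterm t)) / 2)
      with (- ((Series (Bterm t) - Series (Bterm (- t))) / 2)) by field.
    rewrite Rabs_Ropp, Ev. now apply Bminus_formula_bound.
Qed.

Lemma Wplus_bounded (x : R) : irrational x ->
  ex_series (Wterm x) -> ex_series (Wterm (- x)) -> Rabs (Wplus x) <= 2.
Proof.
  intros Hirr HW HWm. unfold Wplus.
  destruct (irrational_reduce_half x Hirr) as (t & Ht & [[E Em] | [E Em]]);
    rewrite (Wterm_frac_eq _ _ E), (Wterm_frac_eq _ _ Em) in *.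
  - destruct (Wplus_closed_form t Ht HW) as [_ Ev]. unfold Wplus in Ev.
    rewrite Ev. now apply Wplus_formula_bound.
  - destruct (Wplus_closed_form t Ht HWm) as [_ Ev]. unfold Wplus in Ev.
    rewrite Rplus_comm, Ev. now apply Wplus_formula_bound.
Qed.

Theorem mainTheorem3 :
  (* (a) *)
  (forall x : R, irrational x -> 0 < x < 1 / 2 ->
     ex_series (Bterm x) ->
     ex_series (Bterm (- x)) /\ Bminus x = x / 2 * ln ((1 - x) / x)) /\
  (* (b) *)
  (forall x : R, irrational x -> 0 < x < 1 / 2 ->
     ex_series (Wterm x) ->
     ex_series (Wterm (- x)) /\
     Wplus x = x / 2 * ln ((1 - x) / x) - ln (1 - x)) /\
  (* uniform boundedness of B^- and W^+ on the irrationals where defined *)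
  (exists C : R, forall x : R, irrational x ->
     ex_series (Bterm x) -> ex_series (Bterm (- x)) -> Rabs (Bminus x) <= C) /\
  (exists C : R, forall x : R, irrational x ->
     ex_series (Wterm x) -> ex_series (Wterm (- x)) -> Rabs (Wplus x) <= C).
Proof.
  split; [| split; [| split]].
  - intros x _. exact (Bminus_closed_form x).
  - intros x _. exact (Wplus_closed_form x).
  - exists 1. exact Bminus_bounded.
  - exists 2. exact Wplus_bounded.
Qed.
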